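(* Let $\mathcal{C}$ be a full reflective subcategory of $\mathsf{Top}$, closed under isomorphisms and containing the two-point discrete space. If $\mathcal{C}$ contains all indiscrete spaces and at least one space that is not indiscrete, then the finitely generated objects of $\mathcal{C}$ are precisely the finite discrete spaces.
   Context: An object $X$ of $\mathcal{C}$ is finitely generated if for every directed diagram $(Z_i)_{i\in I}$ in $\mathcal{C}$ (indexed by a directed poset, i.e. every finite subset has an upper bound) all of whose connecting morphisms $z_{i,j}$ are monomorphisms, with colimit cocone $c_i:Z_i\to Z$ in $\mathcal{C}$, every morphism $f:X\to Z$ factorizes as $f=c_i\cdot g$ for some $i$ and $g:X\to Z_i$, and if also $f=c_i\cdot g'$ then $z_{i,j}\cdot g=z_{i,j}\cdot g'$ for some connecting morphism $z_{i,j}$. *)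

From HB Require Import structures.
From mathcomp Require Import all_boot all_order all_algebra.
From mathcomp Require Import all_classical all_reals topology.
From Stdlib Require List.
Set Implicit Arguments. Unset Strict Implicit. Unset Printing Implicit Defensive.
Local Open Scope classical_set_scope.

(* A subcategory of Top is given by a predicate on objects; it is full,
   so its morphisms are all continuous maps between its objects. *)
Definition subcat := topologicalType -> Prop.

Definition is_homeomorphism (X Y : topologicalType) (f : X -> Y) :=
  continuous f /\ exists g : Y -> X, continuous g /\ g \o f = id /\ f \o g = id.

Definition iso_closed (C : subcat) :=
  forall (X Y : topologicalType) (f : X -> Y), is_homeomorphism f -> C X -> C Y.

Definition reflective (C : subcat) :=
  forall X : topologicalType, exists (RX : topologicalType) (eta : X -> RX),
    [/\ C RX, continuous eta &
      forall (Y : topologicalType), C Y -> forall f : X -> Y, continuous f ->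
        (exists g : RX -> Y, continuous g /\ g \o eta = f) /\
        (forall g g' : RX -> Y, continuous g -> continuous g' ->
           g \o eta = f -> g' \o eta = f -> g = g')].

Definition discrete_top (X : topologicalType) := forall A : set X, open A.
Definition indiscrete_top (X : topologicalType) :=
  forall A : set X, open A -> A = set0 \/ A = setT.

Definition two_point_discrete (X : topologicalType) :=
  discrete_top X /\ exists a b : X, a <> b /\ forall x : X, x = a \/ x = b.

Definition Cmono (C : subcat) (A B : topologicalType) (f : A -> B) :=
  forall W : topologicalType, C W -> forall g h : W -> A,
    continuous g -> continuous h -> f \o g = f \o h -> g = h.

Definition directed_poset (I : Type) (le : I -> I -> Prop) :=
  [/\ forall i, le i i,
      forall i j, le i j -> le j i -> i = j,
      forall i j k, le i j -> le j k -> le i k &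
      forall s : list I, exists u, forall i, List.In i s -> le i u].

Definition Cdiagram (C : subcat) (I : Type) (le : I -> I -> Prop)
  (Z : I -> topologicalType) (z : forall i j, le i j -> Z i -> Z j) :=
  [/\ forall i, C (Z i),
      forall i j (p : le i j), continuous (z i j p),
      forall i (p : le i i), z i i p = id &
      forall i j k (p : le i j) (q : le j k) (r : le i k),
        z j k q \o z i j p = z i k r].

Definition cocone (I : Type) (le : I -> I -> Prop)
  (Z : I -> topologicalType) (z : forall i j, le i j -> Z i -> Z j)
  (W : topologicalType) (d : forall i, Z i -> W) :=
  (forall i, continuous (d i)) /\
  (forall i j (p : le i j), d j \o z i j p = d i).

Definition Ccolimit (C : subcat) (I : Type) (le : I -> I -> Prop)
  (Z : I -> topologicalType) (z : forall i j, le i j -> Z i -> Z j)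
  (L : topologicalType) (c : forall i, Z i -> L) :=
  [/\ C L, cocone z c &
    forall W : topologicalType, C W -> forall d : forall i, Z i -> W, cocone z d ->
      (exists u : L -> W, continuous u /\ forall i, u \o c i = d i) /\
      (forall u u' : L -> W, continuous u -> continuous u' ->
         (forall i, u \o c i = d i) -> (forall i, u' \o c i = d i) -> u = u')].

Definition finitely_generated (C : subcat) (X : topologicalType) :=
  forall (I : Type) (le : I -> I -> Prop)
    (Z : I -> topologicalType) (z : forall i j, le i j -> Z i -> Z j)
    (L : topologicalType) (c : forall i, Z i -> L),
    directed_poset le -> Cdiagram C z ->
    (forall i j (p : le i j), Cmono C (z i j p)) ->
    Ccolimit C z c ->
    forall f : X -> L, continuous f ->
      (exists i (g : X -> Z i), continuous g /\ f = c i \o g) /\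
      (forall i (g g' : X -> Z i), continuous g -> continuous g' ->
         f = c i \o g -> f = c i \o g' ->
         exists j (p : le i j), z i j p \o g = z i j p \o g').

From HB Require Import structures.
From mathcomp Require Import all_boot all_order all_algebra.
From mathcomp Require Import all_classical all_reals topology.

(* Since C contains the two-point indiscrete space, a directed colimit in C is
   jointly surjective, and it identifies two elements of a stage only if they
   become equal at some later stage. Hence every map from a finite discrete space
   into such a colimit factors through a stage, and the factorization is unique
   once we pass to a later stage.

   Conversely, let X be finitely generated. The indiscrete spaces on the finite
   subsets of X form a directed diagram whose colimit is the indiscrete space on
   X. Factoring the identity of X through one of them shows that X is finite.
   For discreteness, note first that C contains every space Z with a basis of
   clopen sets. Testing against indiscrete spaces shows that the reflection unit
   of Z is bijective. Testing clopen sets against the two-point discrete space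
   shows that its inverse is continuous. At stage n, take two sequences with two
   limits, and glue the first n terms of each sequence to the opposite limit.
   Every stage has a clopen basis that separates the two limits, but the
   colimit of the stages is indiscrete. A map sending a subset A of X to one
   limit and its complement to the other therefore factors through some stage,
   so A is open. *)

Set Implicit Arguments. Unset Strict Implicit. Unset Printing Implicit Defensive.
Local Open Scope classical_set_scope.

Definition indisc (T : Type) : Type := T.
HB.instance Definition _ (T : Type) := gen_eqMixin (indisc T).
HB.instance Definition _ (T : Type) := gen_choiceMixin (indisc T).

Section Indiscrete.
Variable T : Type.

Definition indisc_open (A : set (indisc T)) := A = set0 \/ A = setT.

Lemma indisc_openT : indisc_open setT.
Proof. by right. Qed.

Lemma indisc_openI : setI_closed indisc_open.
Proof.
by move=> A B [->|->] [->|->]; rewrite ?set0I ?setI0 ?setIT; [left|left|left|right].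
Qed.

Lemma indisc_open_bigcup (I : Type) (F : I -> set (indisc T)) :
  (forall i, indisc_open (F i)) -> indisc_open (\bigcup_i F i).
Proof.
move=> oF; have [[i Fi]|noT] := pselect (exists i, F i = setT).
  by right; apply/seteqP; split=> // x _; exists i; rewrite ?Fi.
left; apply/seteqP; split=> // x [i _ Fix].
by case: (oF i) Fix => [->//|FiT]; case: noT; exists i.
Qed.

HB.instance Definition _ :=
  isOpenTopological.Build (indisc T) indisc_openT indisc_openI indisc_open_bigcup.

Lemma indiscrete_indisc : indiscrete_top (indisc T).
Proof. by []. Qed.

Lemma continuous_to_indisc (Y : topologicalType) (f : Y -> indisc T) : continuous f.
Proof.
apply/continuousP => A [->|->]; rewrite ?preimage_set0 ?preimage_setT.
- exact: open0.
- exact: openT.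
Qed.

Lemma continuous_from_indiscP (Y : topologicalType) (f : indisc T -> Y) :
  continuous f <-> forall O, open O -> forall x y, O (f x) -> O (f y).
Proof.
split=> [/continuousP fc O oO x y Ofx|fO].
  have [E|E] := fc O oO; last by rewrite -[O _]/((f @^-1` O) y) E.
  by have : (f @^-1` O) x := Ofx; rewrite E.
apply/continuousP => O oO.
have [[x Ofx]|nO] := pselect (exists x, O (f x)).
  suff -> : f @^-1` O = setT by exact: openT.
  by apply/seteqP; split=> // y _; exact: fO Ofx.
suff -> : f @^-1` O = set0 by exact: open0.
by apply/seteqP; split=> // y Ofy; apply: nO; exists y.
Qed.

End Indiscrete.
Arguments continuous_to_indisc {T Y} f.
Arguments indiscrete_indisc : clear implicits.

Lemma epi_bool_surjective (A L : Type) (e : A -> L) :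
  (forall g g' : L -> bool, g \o e = g' \o e -> g = g') -> forall l, exists a, e a = l.
Proof.
move=> epi l.
have /(congr1 (fun g => g l)) : (fun _ => true) = (fun l => `[< exists a, e a = l >]).
  by apply: epi; apply: funext => a; apply/esym/asboolP; exists a.
by move/esym/asboolP.
Qed.

Lemma jointly_surjective_eq (I : Type) (Z : I -> Type) (L W : Type)
    (c : forall i, Z i -> L) (u u' : L -> W) :
  (forall l, exists i (w : Z i), c i w = l) ->
  (forall i, u \o c i = u' \o c i) -> u = u'.
Proof.
move=> csurj ucu'; apply: funext => l; have [i [w <-]] := csurj l.
exact: (congr1 (fun g => g w) (ucu' i)).
Qed.

Lemma injective_Cmono (C : subcat) (A B : topologicalType) (f : A -> B) :
  injective f -> Cmono C f.
Proof.
move=> finj W _ g h _ _ fgh; apply: funext => w; apply: finj.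
exact: (congr1 (fun k => k w) fgh).
Qed.

Section Reflection.
Variables (C : subcat) (X RX : topologicalType) (eta : X -> RX).
Hypothesis eta_universal : forall Y : topologicalType, C Y ->
  forall f : X -> Y, continuous f ->
    (exists g : RX -> Y, continuous g /\ g \o eta = f) /\
    (forall g g' : RX -> Y, continuous g -> continuous g' ->
       g \o eta = f -> g' \o eta = f -> g = g').

Lemma reflection_surjective : C (indisc bool) -> forall r, exists x, eta x = r.
Proof.
move=> Cbool; apply: epi_bool_surjective => g g' gg'.
have g_eta_cont := continuous_to_indisc (g \o eta : X -> indisc bool).
have [_ /(_ g g')] := eta_universal Cbool g_eta_cont.
by apply; rewrite ?gg' //; exact: continuous_to_indisc.
Qed.

Lemma reflection_retraction : C (indisc X) -> exists g : RX -> X, cancel eta g.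
Proof.
move=> CX; have id_cont := continuous_to_indisc (id : X -> indisc X).
have [[g [_ geta]] _] := eta_universal CX id_cont.
by exists g => x; exact: (congr1 (fun h => h x) geta).
Qed.

End Reflection.

Definition clopen_base (Z : topologicalType) :=
  forall U : set Z, open U -> forall x, U x -> exists2 K, clopen K & K x /\ K `<=` U.

Lemma continuous_clopen_base (Y Z : topologicalType) (g : Y -> Z) :
  clopen_base Z -> (forall K, clopen K -> open (g @^-1` K)) -> continuous g.
Proof.
move=> Zbase gK; apply/continuousP => U oU.
have -> : g @^-1` U = \bigcup_(K in [set K | clopen K /\ K `<=` U]) g @^-1` K.
  apply/seteqP; split=> [y Ugy|y [K [_ KU] Kgy]]; last exact: KU.
  by have [K Kclopen [Kgy KU]] := Zbase U oU (g y) Ugy; exists K.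
by apply: bigcup_open => K [Kclopen _]; exact: gK.
Qed.

Lemma continuous_clopen_indicator (Y Z : topologicalType) (K : set Y) (a b : Z) :
  clopen K -> continuous (fun y => if `[< K y >] then a else b).
Proof.
move=> [oK cK]; set chi := fun y => _; apply/continuousP => A _.
have oKC : open (~` K) by rewrite openC.
have [Aa|Aa] := pselect (A a); have [Ab|Ab] := pselect (A b).
- suff -> : chi @^-1` A = setT by exact: openT.
  by apply/seteqP; split=> // y _; rewrite /preimage /chi /=; case: ifP.
- suff -> : chi @^-1` A = K by [].
  by apply/seteqP; split=> y; rewrite /preimage /chi /=; case: (asboolP (K y)).
- suff -> : chi @^-1` A = ~` K by [].
  by apply/seteqP; split=> y; rewrite /preimage /chi /=; case: (asboolP (K y)).
- suff -> : chi @^-1` A = set0 by exact: open0.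
  by apply/seteqP; split=> // y; rewrite /preimage /chi /=; case: ifP.
Qed.
Arguments continuous_clopen_indicator {Y Z K} a b.

Lemma clopen_base_mem (C : subcat) : reflective C -> iso_closed C ->
  (forall X, indiscrete_top X -> C X) ->
  forall D : topologicalType, C D -> two_point_discrete D ->
  forall Z : topologicalType, clopen_base Z -> C Z.
Proof.
move=> reflC isoC indiscC D CD [Ddisc [a [b [ab _]]]] Z Zbase.
have [RZ [eta [CRZ eta_cont eta_univ]]] := reflC Z.
have [g etaK] := reflection_retraction eta_univ (indiscC _ (indiscrete_indisc Z)).
have eta_surj := reflection_surjective eta_univ (indiscC _ (indiscrete_indisc bool)).
have gK : cancel g eta by move=> r; have [x <-] := eta_surj r; rewrite etaK.
have g_cont : continuous g.
  apply: continuous_clopen_base Zbase _ => K Kclopen.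
  have [[h [h_cont heta]] _] := eta_univ _ CD _ (continuous_clopen_indicator a b Kclopen).
  have hE r : h r = if `[< K (g r) >] then a else b.
    by rewrite -[r in h r]gK; exact: (congr1 (fun k => k (g r)) heta).
  have -> : g @^-1` K = h @^-1` [set a].
    apply/seteqP; split=> r; rewrite /preimage /= hE; case: asboolP => // _ ba.
    by case: ab; rewrite ba.
  by move/continuousP: h_cont; apply; exact: Ddisc.
apply: (isoC RZ Z g) CRZ; split=> //.
by exists eta; split=> //; split; apply: funext; [exact: gK | exact: etaK].
Qed.

Section Directed.
Variables (I : Type) (le : I -> I -> Prop).
Hypothesis le_directed : directed_poset le.

Lemma directed_trans i j k : le i j -> le j k -> le i k.
Proof. by case: le_directed => _ _ + _; apply. Qed.

Lemma directed_ub2 i j : exists u, le i u /\ le j u.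
Proof.
have [_ _ _ /(_ [:: i; j]) [u ub]] := le_directed.
by exists u; split; apply: ub; [left | right; left].
Qed.

Lemma directed_ub_finite (T : eqType) (h : T -> I) :
  finite_set [set: T] -> exists u, forall t, le (h t) u.
Proof.
case/finite_seqP => s sT.
suff [u ub] : exists u, forall t, t \in s -> le (h t) u.
  by exists u => t; apply: ub; have : [set: T] t by []; rewrite sT.
elim: s {sT} => [|t s [u ub]].
  by have [_ _ _ /(_ [::]) [u _]] := le_directed; exists u.
have [v [tv uv]] := directed_ub2 (h t) u.
exists v => t'; rewrite in_cons => /predU1P [->//|/ub t'u].
exact: directed_trans t'u uv.
Qed.

End Directed.

Section DirectedColimit.
Variables (C : subcat) (I : Type) (le : I -> I -> Prop) (Z : I -> topologicalType)
  (z : forall i j, le i j -> Z i -> Z j) (L : topologicalType) (c : forall i, Z i -> L).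
Hypotheses (le_directed : directed_poset le) (z_diagram : Cdiagram C z)
  (c_colimit : Ccolimit C z c) (Cbool : C (indisc bool)).
Arguments z : clear implicits.
Arguments c : clear implicits.

Lemma diagram_comp i j k (p : le i j) (q : le j k) (r : le i k) x :
  z j k q (z i j p x) = z i k r x.
Proof. by case: z_diagram => _ _ _ /(_ i j k p q r)/(congr1 (fun f => f x)). Qed.
Arguments diagram_comp {i j k} p q r x.

Lemma cocone_comp i j (p : le i j) x : c j (z i j p x) = c i x.
Proof. by case: c_colimit => _ [_ /(_ i j p)/(congr1 (fun f => f x))]. Qed.

Lemma colimit_surjective l : exists i (w : Z i), c i w = l.
Proof.
have [[i w] <-] : exists iw : {i & Z i}, c (projT1 iw) (projT2 iw) = l.
  apply: epi_bool_surjective => g g' gcg'.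
  case: c_colimit => _ _ /(_ _ Cbool (fun i => g \o c i : Z i -> indisc bool)) [].
    split=> [i|i j p]; first exact: continuous_to_indisc.
    by apply: funext => x /=; rewrite cocone_comp.
  move=> _ /(_ g g'); apply=> // [||i]; try exact: continuous_to_indisc.
  by apply: funext => x; exact: (congr1 (fun h => h (existT _ i x)) (esym gcg')).
by exists i, w.
Qed.

Lemma colimit_eq_eventually i (w w' : Z i) :
  c i w = c i w' -> exists j (p : le i j), z i j p w = z i j p w'.
Proof.
move=> cww'.
pose d j (y : Z j) : indisc bool :=
  `[< exists k (p : le i k) (q : le j k), z j k q y = z i k p w >].
have d_cocone : cocone z d.
  split=> [j|j j' p0]; first exact: continuous_to_indisc.
  apply: funext => y; apply: asbool_equiv_eq; split=> [[k [p [q zy]]]|[k [p [q zy]]]].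
    exists k, p, (directed_trans le_directed p0 q).
    by rewrite -zy; apply/esym/diagram_comp.
  have [u [ku j'u]] := directed_ub2 le_directed k j'.
  exists u, (directed_trans le_directed p ku), j'u.
  rewrite (diagram_comp p0 j'u (directed_trans le_directed p0 j'u)).
  rewrite -(diagram_comp q ku) zy; exact: diagram_comp.
case: c_colimit => _ _ /(_ _ Cbool d d_cocone) [[u [_ ucd]] _].
have /asboolP [k [p [q zw']]] : d i w'.
  rewrite -(congr1 (fun f => f w') (ucd i)) /= -cww'.
  rewrite -[u (c i w)]/((u \o c i) w) ucd; apply/asboolP.
  by case: le_directed => le_refl _ _ _; exists i, (le_refl i), (le_refl i).
by exists k, p; rewrite -zw' (Prop_irrelevance p q).
Qed.

Lemma colimit_lift_finite (X : topologicalType) (f : X -> L) :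
  finite_set [set: X] -> discrete_top X ->
  exists i (g : X -> Z i), continuous g /\ f = c i \o g.
Proof.
move=> finX discX.
have /choice [e ce] : forall x, exists iw : {i & Z i}, c (projT1 iw) (projT2 iw) = f x.
  by move=> x; have [i [w cw]] := colimit_surjective (f x); exists (existT _ i w).
have [u eu] := directed_ub_finite le_directed (fun x => projT1 (e x)) finX.
exists u, (fun x => z _ u (eu x) (projT2 (e x))); split.
  by apply/continuousP => A _; exact: discX.
by apply: funext => x /=; rewrite cocone_comp ce.
Qed.

Lemma colimit_factor_unique_finite (X : topologicalType) i (g g' : X -> Z i) :
  finite_set [set: X] -> c i \o g = c i \o g' ->
  exists j (p : le i j), z i j p \o g = z i j p \o g'.
Proof.
move=> finX cgg'.
have /choice [e ze] : forall x, exists jp : {j & le i j},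
    z i (projT1 jp) (projT2 jp) (g x) = z i (projT1 jp) (projT2 jp) (g' x).
  move=> x; have [j [p zx]] := colimit_eq_eventually (congr1 (fun f => f x) cgg').
  by exists (existT _ j p).
have [u eu] := directed_ub_finite le_directed (fun x => projT1 (e x)) finX.
have [v [iv uv]] := directed_ub2 le_directed i u.
exists v, iv; apply: funext => x /=.
have ev := directed_trans le_directed (eu x) uv.
by rewrite -!(diagram_comp (projT2 (e x)) ev iv) ze.
Qed.

End DirectedColimit.

Lemma finite_discrete_finitely_generated (C : subcat) : C (indisc bool) ->
  forall X : topologicalType, finite_set [set: X] -> discrete_top X ->
  finitely_generated C X.
Proof.
move=> Cbool X finX discX I le Z z L c le_directed z_diagram _ c_colimit f _; split.
  exact (colimit_lift_finite le_directed c_colimit Cbool f finX discX).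
move=> i g g' _ _ fg fg'.
apply: (colimit_factor_unique_finite le_directed z_diagram c_colimit Cbool finX).
by rewrite -fg -fg'.
Qed.

Lemma sval_inj (T : Type) (P : T -> Prop) : injective (@proj1_sig T P).
Proof. by case=> x px [y py] /= xy; exact: eq_exist. Qed.

Section FiniteSubsets.
Variable X : Type.

Definition finsub := {F : set X | finite_set F}.

Definition finsub_le (F G : finsub) := sval F `<=` sval G.

Definition finsub_space (F : finsub) := indisc {x | sval F x}.

Definition finsub_incl (F G : finsub) (p : finsub_le F G) (x : finsub_space F) :
    finsub_space G :=
  exist _ (sval x) (p _ (svalP x)).

Definition finsub_val (F : finsub) (x : finsub_space F) : indisc X := sval x.

Definition finsub1 (x : X) : finsub := exist _ [set x] (finite_set1 x).

Definition finsub1_elt (x : X) : finsub_space (finsub1 x) := exist [set x] x erefl.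

Lemma finite_finsubU (F G : finsub) : finite_set (sval F `|` sval G).
Proof. by rewrite finite_setU; split; exact: svalP. Qed.

Definition finsubU (F G : finsub) : finsub := exist _ _ (finite_finsubU F G).

Lemma finsub_directed : directed_poset finsub_le.
Proof.
split=> [F //|F G FG GF|F G H FG GH x /FG /GH //|].
  by apply: sval_inj; apply/seteqP.
elim=> [|F s [u ub]]; first by exists (exist _ set0 (finite_set0 X)).
exists (finsubU F u) => G /= [<-|/ub Gu] x Gx; by [left | right; exact: Gu].
Qed.

Lemma finsub_diagram (C : subcat) : (forall Y, indiscrete_top Y -> C Y) ->
  Cdiagram C finsub_incl.
Proof.
move=> indiscC; split=> [F|F G p|F p|F G H p q r].
- exact/indiscC/indiscrete_indisc.
- exact: continuous_to_indisc.
- by apply: funext => x; apply: sval_inj.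
- by apply: funext => x; apply: sval_inj.
Qed.

Lemma finsub_incl_mono (C : subcat) F G (p : finsub_le F G) : Cmono C (finsub_incl p).
Proof.
by apply: injective_Cmono => x y /(congr1 sval); exact: (@sval_inj _ (sval F)).
Qed.

Lemma finsub_val_surjective (x : indisc X) :
  exists F (w : finsub_space F), finsub_val w = x.
Proof. by exists (finsub1 x), (finsub1_elt x). Qed.

Lemma finsub_colimit (C : subcat) : (forall Y, indiscrete_top Y -> C Y) ->
  Ccolimit C finsub_incl finsub_val.
Proof.
move=> indiscC; split=> [|//|W CW d [d_cont d_comp]].
- exact/indiscC/indiscrete_indisc.
- by split=> [F|F G p]; [exact: continuous_to_indisc | apply: funext].
pose u (x : indisc X) := d (finsub1 x) (finsub1_elt x).
have ud F (w : finsub_space F) : u (sval w) = d F w.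
  case: w => x Fx; have p : finsub_le (finsub1 x) F by move=> y ->.
  by rewrite /u -(d_comp _ _ p) /=; congr (d F _); exact: sval_inj.
split=> [|u1 u2 _ _ u1d u2d]; last first.
  by apply: (jointly_surjective_eq finsub_val_surjective) => F; rewrite u1d u2d.
exists u; split=> [|F]; last by apply: funext => w; exact: ud.
apply/continuous_from_indiscP => O oO x y.
pose F := finsubU (finsub1 x) (finsub1 y).
rewrite (ud F (exist _ x (or_introl erefl))) (ud F (exist _ y (or_intror erefl))).
by move/continuous_from_indiscP: (d_cont F); apply.
Qed.

End FiniteSubsets.

Lemma finitely_generated_finite (C : subcat) : (forall Y, indiscrete_top Y -> C Y) ->
  forall X : topologicalType, finitely_generated C X -> finite_set [set: X].
Proof.
move=> indiscC X fgX.
have [[F [g [_ idg]]] _] := fgX _ _ _ _ _ _ (finsub_directed X)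
  (finsub_diagram X indiscC) (@finsub_incl_mono X C) (finsub_colimit X indiscC)
  (id : X -> indisc X) (continuous_to_indisc _).
apply: sub_finite_set (svalP F) => x _.
by rewrite [x](congr1 (fun h => h x) idg); exact: svalP.
Qed.

Definition stage (n : nat) : Type := bool * option nat.
HB.instance Definition _ (n : nat) := Choice.on (stage n).

(* In stage n, (b, Some k) converges to (b, None) as k grows, and for k < n it is
   topologically indistinguishable from the opposite limit (~~ b, None). *)
Definition stage_open n (U : set (stage n)) :=
  (forall b, U (b, None) -> exists m, forall k, (m <= k)%N -> U (b, Some k)) /\
  (forall b k, (k < n)%N -> U (b, Some k) <-> U (~~ b, None)).
Arguments stage_open : clear implicits.

Section StageTopology.
Variable n : nat.

Lemma stage_openT : stage_open n setT.
Proof. by split=> // b _; exists 0%N. Qed.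

Lemma stage_openI : setI_closed (stage_open n).
Proof.
move=> A B [A_tail A_glue] [B_tail B_glue].
split=> [b [/A_tail [m Am] /B_tail [m' Bm']]|b k kn].
  exists (maxn m m') => k; rewrite geq_max => /andP [mk m'k].
  by split; [exact: Am | exact: Bm'].
by split=> [] [/(A_glue _ _ kn) Ak /(B_glue _ _ kn) Bk].
Qed.

Lemma stage_open_bigcup (I : Type) (F : I -> set (stage n)) :
  (forall i, stage_open n (F i)) -> stage_open n (\bigcup_i F i).
Proof.
move=> oF; split=> [b [i _ /(proj1 (oF i)) [m Fm]]|b k kn].
  by exists m => k mk; exists i => //; exact: Fm.
by split=> [] [i _ /(proj2 (oF i) _ _ kn) Fk]; exists i.
Qed.

HB.instance Definition _ :=
  isOpenTopological.Build (stage n) stage_openT stage_openI stage_open_bigcup.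

Lemma stage_openE (U : set (stage n)) : open U = stage_open n U.
Proof. by []. Qed.

End StageTopology.

Definition limit_nbhd n (c : bool) (m : nat) : set (stage n) := fun y =>
  match y with
  | (d, None) => d = c
  | (d, Some k) => if (k < n)%N then d = ~~ c else d = c /\ (m <= k)%N
  end.
Arguments limit_nbhd : clear implicits.

Lemma limit_nbhd_clopen n c m : (n <= m)%N -> clopen (limit_nbhd n c m).
Proof.
move=> nm; rewrite /clopen -openC !stage_openE.
have tail k : (m <= k)%N -> (k < n)%N = false.
  by move=> mk; apply/negbTE; rewrite -leqNgt (leq_trans nm mk).
split; split=> [b /= bc|b k kn /=]; rewrite ?kn.
- by exists m => k mk; rewrite tail.
- by case: b c => [] [].
- by exists m => k mk /=; rewrite tail // => -[].
- by case: b c => [] [].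
Qed.

Lemma stage_clopen1 n b k : (n <= k)%N -> clopen [set (b, Some k) : stage n].
Proof.
move=> nk; rewrite /clopen -openC !stage_openE.
have neq_k j : (j < n)%N -> j <> k by move=> + jk; rewrite jk ltnNge nk.
split; split=> [b' /=|b' j /neq_k jk /=].
- by [].
- by split=> // -[_ /jk].
- by move=> _; exists k.+1 => j kj [_ jk]; move: kj; rewrite jk ltnn.
- by split=> // _ [_ /jk].
Qed.

Lemma stage_clopen_base n : clopen_base (stage n).
Proof.
move=> U; rewrite stage_openE => -[U_tail U_glue].
have limit_base c : U (c, None) ->
    exists2 K : set (stage n), clopen K &
      [/\ K (c, None), K `<=` U & forall k, (k < n)%N -> K (~~ c, Some k)].
  move=> /[dup] Uc /U_tail [m Um]; exists (limit_nbhd n c (maxn n m)).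
    exact/limit_nbhd_clopen/leq_maxl.
  split=> // [[d [k|]]|k kn] /=; last by rewrite kn.
    case: ifP => kn; first by move=> ->; apply/(U_glue _ _ kn); rewrite negbK.
    by case=> -> mk; apply: Um; apply: leq_trans mk; exact: leq_maxr.
  by move=> ->.
move=> [b [k|]] Ux; last first.
  by have [K Kclopen [Kx KU _]] := limit_base _ Ux; exists K.
have [kn|nk] := ltnP k n; last first.
  by exists [set (b, Some k)]; [exact: stage_clopen1 | split=> // y ->].
have [K Kclopen [_ KU Kglued]] := limit_base _ (proj1 (U_glue _ _ kn) Ux).
by exists K => //; split=> //; rewrite -[b]negbK; exact: Kglued.
Qed.

Lemma open_all_stages_trivial (P : set (bool * option nat)) :
  (forall n, stage_open n P) -> forall x y, P x -> P y.
Proof.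
move=> P_open x y Px.
have glue b k : P (b, Some k) <-> P (~~ b, None) := (P_open k.+1).2 b k (ltnSn k).
have swap b : P (b, None) -> P (~~ b, None).
  by move=> /(P_open 0%N).1 [m Pm]; apply/glue/Pm.
have all_limits b : P (b, None).
  have [c Pc] : exists c, P (c, None).
    by case: x Px => b' [k /glue|] Pb'; [exists (~~ b') | exists b'].
  by have := swap _ Pc; case: b c Pc => [] [].
by case: y => b [k|]; [apply/glue|]; exact: all_limits.
Qed.

Lemma nat_directed : directed_poset (fun i j : nat => (i <= j)%N).
Proof.
split=> [i|i j ij ji|i j k|]; first exact: leqnn.
- by apply/eqP; rewrite eqn_leq ij ji.
- exact: leq_trans.
elim=> [|i s [u ub]]; first by exists 0%N.
exists (maxn i u) => j /= [<-|/ub ju]; first exact: leq_maxl.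
exact/(leq_trans ju)/leq_maxr.
Qed.

Definition stage_incl i j (_ : (i <= j)%N) (y : stage i) : stage j := y.

Definition stage_val n (y : stage n) : indisc (bool * option nat) := y.
Arguments stage_incl : clear implicits.
Arguments stage_val : clear implicits.

Lemma stage_diagram (C : subcat) :
  (forall Z, clopen_base Z -> C Z) -> Cdiagram C stage_incl.
Proof.
move=> zeroC; split=> // [n|i j ij]; first exact/zeroC/stage_clopen_base.
apply/continuousP => U; rewrite !stage_openE => -[U_tail U_glue]; split=> // b k ki.
exact/U_glue/(leq_trans ki ij).
Qed.

Lemma stage_colimit (C : subcat) :
  C (indisc (bool * option nat)) -> Ccolimit C stage_incl stage_val.
Proof.
move=> Cindisc; split=> // [|W CW d [d_cont d_comp]].
  by split=> // n; exact: continuous_to_indisc.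
have dn n y : d n y = d 0%N y by have := congr1 (fun f => f y) (d_comp 0%N n (leq0n n)).
have val_surj (y : indisc (bool * option nat)) :
    exists n (w : stage n), stage_val n w = y by exists 0%N, y.
split=> [|u u' _ _ ud u'd]; last first.
  by apply: (jointly_surjective_eq val_surj) => n; rewrite ud u'd.
exists (fun y => d 0%N y); split=> [|n]; last by apply: funext => y /=; rewrite dn.
apply/continuous_from_indiscP => O oO; apply: open_all_stages_trivial => n.
rewrite -stage_openE.
have := (continuousP (d n)).1 (d_cont n) O oO.
by congr open; apply/seteqP; split=> y; rewrite /preimage /= dn.
Qed.

Lemma finitely_generated_discrete (C : subcat) : (forall Z, clopen_base Z -> C Z) ->
  C (indisc (bool * option nat)) ->
  forall X : topologicalType, finitely_generated C X -> discrete_top X.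
Proof.
move=> zeroC Cindisc X fgX A.
pose f (x : X) : indisc (bool * option nat) := (`[< A x >], None).
have [[n [g [g_cont fg]]] _] := fgX _ _ _ _ _ _ nat_directed (stage_diagram zeroC)
  (fun i j p => injective_Cmono (@inj_id _)) (stage_colimit Cindisc)
  f (continuous_to_indisc f).
have -> : A = g @^-1` limit_nbhd n true n.
  apply/seteqP; split=> x; rewrite /preimage /= -[g x]/((stage_val n \o g) x) -fg /f /=;
    by case: (asboolP (A x)).
by move/continuousP: g_cont; apply; case: (limit_nbhd_clopen true (leqnn n)).
Qed.

Theorem theorem7p10 (C : topologicalType -> Prop) :
  reflective C -> iso_closed C ->
  (exists X : topologicalType, C X /\ two_point_discrete X) ->
  (forall X : topologicalType, indiscrete_top X -> C X) ->
  (exists X : topologicalType, C X /\ ~ indiscrete_top X) ->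
  forall X : topologicalType, C X ->
    (finitely_generated C X <-> (finite_set [set: X] /\ discrete_top X)).
Proof.
(* The non-indiscrete space in C is already provided by the two-point discrete
   space, and the hypothesis that X lies in C is not needed. *)
move=> reflC isoC [D [CD D2]] indiscC _ X _.
have zeroC := clopen_base_mem reflC isoC indiscC CD D2.
have Cindisc T : C (indisc T) by apply/indiscC/indiscrete_indisc.
split=> [fgX | [finX discX]].
  split; first exact: finitely_generated_finite indiscC X fgX.
  exact: finitely_generated_discrete zeroC (Cindisc _) X fgX.
exact: finite_discrete_finitely_generated (Cindisc _) X finX discX.
Qed.
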